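(* Let $A$ take values $a_1,\ldots,a_{N_A}$ and $B$ take values $b_1,\ldots,b_{N_B}$, and let $P$ be a generalized two-variable probability assignment (as defined in the context) satisfying Axiom 5, with $\mathbf{P}(A|B)$ invertible. Let $\mathbf{P}(A,B)$ be a non-product joint distribution. Then $$\mathbf{P}(B,A)=\mathbf{P}(B)\,\mathbf{P}(A,B)^{-1}\,\mathbf{P}(A).$$
   Context: Generalized two-variable probability assignment: $P(a_i,b_j)$ denotes the (real-valued, not necessarily nonnegative) probability of $a_i$ and $b_j$ relative to the ordering in which $B$ precedes $A$, and $P(b_j,a_i)$ the probability relative to the ordering in which $A$ precedes $B$. These satisfy $\sum_{i,j}P(a_i,b_j)=1=\sum_{i,j}P(b_j,a_i)$ and the marginals are ordering-independent: $P(a_i)=\sum_j P(a_i,b_j)=\sum_j P(b_j,a_i)$, $P(b_j)=\sum_i P(a_i,b_j)=\sum_i P(b_j,a_i)$. Conditionals: $P(a_i|b_j)=P(a_i,b_j)/P(b_j)$, $P(b_j|a_i)=P(b_j,a_i)/P(a_i)$ (marginals assumed nonzero). Matrices: $\mathbf{P}(A,B)$ is $N_A\times N_B$ with entries $P(a_i,b_j)$; $\mathbf{P}(B,A)$ is $N_B\times N_A$ with entries $P(b_j,a_i)$; $\mathbf{P}(A|B)$ is $N_A\times N_B$ with entries $P(a_i|b_j)$; $\mathbf{P}(B|A)$ is $N_B\times N_A$ with entries $P(b_j|a_i)$; $\mathbf{P}(A)$ and $\mathbf{P}(B)$ are the diagonal matrices with the marginals $P(a_i)$, resp. $P(b_j)$,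 on the diagonal; $\vec P(A),\vec P(B)$ are the marginal vectors. Axiom 5 (inference axiom): $\mathbf{P}(A|B)$ and $\mathbf{P}(B|A)$ may be specified independently of $\vec P(B)$ and $\vec P(A)$, i.e. the same conditional matrices are consistent with $\vec P(A)=\mathbf{P}(A|B)\vec P(B)$ and $\vec P(B)=\mathbf{P}(B|A)\vec P(A)$ for every choice of the marginals. A distribution is a product distribution if $P(a_i,b_j)=P(a_i)P(b_j)$ for all $i,j$; otherwise non-product. *)

From mathcomp Require Import all_boot all_order all_algebra.
Set Implicit Arguments. Unset Strict Implicit. Unset Printing Implicit Defensive.
Import Order.TTheory GRing.Theory Num.Theory.
Local Open Scope ring_scope.

(* Since P(A|B) is required to be invertible (a square matrix), N_A = N_B = n;
   both variables are indexed by 'I_n.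
   PAB i j = P(a_i, b_j)   (ordering in which B precedes A), PAB : N_A x N_B
   PBA j i = P(b_j, a_i)   (ordering in which A precedes B), PBA : N_B x N_A *)

Section Defs.
Variables (R : realFieldType) (n : nat).

Definition margA (PAB : 'M[R]_n) (i : 'I_n) : R := \sum_j PAB i j.
Definition margB (PAB : 'M[R]_n) (j : 'I_n) : R := \sum_i PAB i j.

Definition gen_prob (PAB PBA : 'M[R]_n) : Prop :=
  \sum_i \sum_j PAB i j = 1 /\
  \sum_j \sum_i PBA j i = 1 /\
  (forall i, \sum_j PBA j i = margA PAB i) /\
  (forall j, \sum_i PBA j i = margB PAB j) /\
  (forall i, margA PAB i != 0) /\
  (forall j, margB PAB j != 0).

Definition condAB (PAB : 'M[R]_n) : 'M[R]_n :=
  \matrix_(i, j) (PAB i j / margB PAB j).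
Definition condBA (PAB PBA : 'M[R]_n) : 'M[R]_n :=
  \matrix_(j, i) (PBA j i / margA PAB i).

Definition diagA (PAB : 'M[R]_n) : 'M[R]_n := diag_mx (\row_i margA PAB i).
Definition diagB (PAB : 'M[R]_n) : 'M[R]_n := diag_mx (\row_j margB PAB j).

Definition axiom5 (PAB PBA : 'M[R]_n) : Prop :=
  forall (pA pB : 'cV[R]_n),
    \sum_i pA i 0 = 1 -> \sum_j pB j 0 = 1 ->
    (pA = condAB PAB *m pB <-> pB = condBA PAB PBA *m pA).

Definition product_distribution (PAB : 'M[R]_n) : Prop :=
  forall i j, PAB i j = margA PAB i * margB PAB j.

End Defs.

From mathcomp Require Import all_boot all_order all_algebra.
Set Implicit Arguments. Unset Strict Implicit. Unset Printing Implicit Defensive.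
Import Order.TTheory GRing.Theory Num.Theory.
Local Open Scope ring_scope.

(* Since every column of P(A|B) sums to 1, the unit vector e_j is an admissible
   marginal P(B) with P(A) = P(A|B) e_j; Axiom 5 then gives e_j = P(B|A) P(A|B) e_j,
   so P(B|A) is the inverse of P(A|B).  Writing P(A,B) = P(A|B) P(B) and
   P(B,A) = P(B|A) P(A) yields P(B,A) = P(B) P(A,B)^-1 P(A). *)

Section Marginals.
Variables (R : realFieldType) (n : nat) (PAB PBA : 'M[R]_n).

Lemma condAB_mul_diagB : (forall j, margB PAB j != 0) ->
  condAB PAB *m diagB PAB = PAB.
Proof.
by move=> hB; apply/matrixP => i j; rewrite mul_mx_diag !mxE divfK.
Qed.

Lemma condBA_mul_diagA : (forall i, margA PAB i != 0) ->
  condBA PAB PBA *m diagA PAB = PBA.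
Proof.
by move=> hA; apply/matrixP => j i; rewrite mul_mx_diag !mxE divfK.
Qed.

Lemma unitmx_diagB : (forall j, margB PAB j != 0) -> diagB PAB \in unitmx.
Proof.
move=> hB; rewrite unitmxE det_diag unitfE.
by apply/prodf_neq0 => j _; rewrite mxE.
Qed.

Lemma sum_col_condAB j : margB PAB j != 0 -> \sum_i condAB PAB i j = 1.
Proof.
by move=> hBj; under eq_bigr do rewrite mxE; rewrite -mulr_suml divff.
Qed.

End Marginals.

Lemma sum_delta_col (R : realFieldType) (n : nat) (j : 'I_n) :
  \sum_i (delta_mx j 0 : 'cV[R]_n) i 0 = 1.
Proof.
rewrite (bigD1 j) //= mxE !eqxx big1 ?addr0 // => k /negbTE kj.
by rewrite mxE kj.
Qed.

Lemma axiom5_condBA_mul_condAB (R : realFieldType) (n : nat) (PAB PBA : 'M[R]_n) :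
  axiom5 PAB PBA -> (forall j, margB PAB j != 0) ->
  condBA PAB PBA *m condAB PAB = 1%:M.
Proof.
move=> ax5 hB; apply/matrixP => i j.
pose e_j : 'cV[R]_n := delta_mx j 0.
have Ce_j : condAB PAB *m e_j = col j (condAB PAB) by rewrite colE.
have sum_Ce_j : \sum_k (condAB PAB *m e_j) k 0 = 1.
  by rewrite Ce_j; under eq_bigr do rewrite mxE; exact: sum_col_condAB.
have e_jE : e_j = condBA PAB PBA *m (condAB PAB *m e_j).
  by apply/(ax5 _ _ sum_Ce_j (sum_delta_col R j)).
have := congr1 (fun M : 'cV[R]_n => M i 0) e_jE.
by rewrite mulmxA /e_j -colE !mxE eqxx andbT => ->.
Qed.

Theorem theorem2 (R : realFieldType) (n : nat) (PAB PBA : 'M[R]_n) :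
  gen_prob PAB PBA ->
  axiom5 PAB PBA ->
  condAB PAB \in unitmx ->
  ~ product_distribution PAB ->
  PBA = diagB PAB *m invmx PAB *m diagA PAB.
Proof.
move=> [_ [_ [_ [_ [hA hB]]]]] ax5 Cu _.
have PAB_unit : PAB \in unitmx.
  by rewrite -(condAB_mul_diagB hB) unitmx_mul Cu unitmx_diagB.
have D_PAB : condBA PAB PBA *m PAB = diagB PAB.
  by rewrite -[X in _ *m X = _](condAB_mul_diagB hB) mulmxA axiom5_condBA_mul_condAB // mul1mx.
by rewrite -(condBA_mul_diagA PBA hA) -D_PAB mulmxK.
Qed.
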